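(* Let $u_n:\mathbb R^p\to\mathbb R^p$, $n\ge1$, be a sequence of random differentiable estimating functions and $\mathbf J_n(\boldsymbol\theta)=-\frac{d}{d\boldsymbol\theta^\top}u_n(\boldsymbol\theta)$. Assume there exist invertible symmetric matrices $\mathbf V_n$ and parameter values $\boldsymbol\theta^*_n\in\mathbb R^p$ such that: (G1) $\|\mathbf V_n^{-1}\|\to0$; (G2) there exists $l>0$ with $\mathbb P(l_n<l)\to0$, where $l_n=\inf_{\|\boldsymbol\phi\|=1}\boldsymbol\phi^\top\mathbf V_n^{-1}\mathbf J_n(\boldsymbol\theta^*_n)\mathbf V_n^{-1}\boldsymbol\phi$; (G3) for every $d>0$, $\gamma_{nd}:=\sup_{\|\mathbf V_n(\boldsymbol\theta-\boldsymbol\theta^*_n)\|\le d}\|\mathbf V_n^{-1}\{\mathbf J_n(\boldsymbol\theta)-\mathbf J_n(\boldsymbol\theta^*_n)\}\mathbf V_n^{-1}\|_M\to0$ in probability; (G4) $\mathbf V_n^{-1}u_n(\boldsymbol\theta^*_n)$ is bounded in probability, i.e. for every $\epsilon>0$ there is $d$ with $\mathbb P(\|\mathbf V_n^{-1}u_n(\boldsymbol\theta^*_n)\|>d)\le\epsilon$ for all sufficiently large $n$. Then for every $\epsilon>0$ there exists $d>0$ such that, for all sufficiently large $n$, \[ \mathbb P\big\{\exists\,\tilde{\boldsymbol\theta}_n:\ u_n(\tilde{\boldsymbol\theta}_n)=0\ \text{and}\ \|\mathbf V_n(\tilde{\boldsymbol\theta}_n-\boldsymbol\theta^*_n)\|<d\big\}>1-\epsilon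 . \]
   Context: For a matrix $\mathbf A=[a_{ij}]$, $\|\mathbf A\|_M=\max_{i,j}|a_{ij}|$; $\|\cdot\|$ denotes the Euclidean norm for vectors and the corresponding operator norm for matrices. The distribution of $u_n$ is governed by an underlying probability measure $\mathbb P$. *)

From HB Require Import structures.
From mathcomp Require Import all_boot all_order all_algebra.
From mathcomp Require Import all_classical all_reals all_analysis.
Set Implicit Arguments. Unset Strict Implicit. Unset Printing Implicit Defensive.
Import Order.TTheory GRing.Theory Num.Theory.
Import numFieldNormedType.Exports.
Local Open Scope classical_set_scope.
Local Open Scope ring_scope.

Definition enorm (R : realType) (p : nat) (v : 'cV[R]_p) : R :=
  Num.sqrt (\sum_(i < p) v i 0 ^+ 2).

Definition opnorm (R : realType) (p : nat) (A : 'M[R]_p) : R :=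
  sup [set enorm (A *m x) | x in [set x : 'cV[R]_p | enorm x <= 1]].

Definition mnormM (R : realType) (m n : nat) (A : 'M[R]_(m, n)) : R :=
  \big[Num.max/0]_(i < m) \big[Num.max/0]_(j < n) `|A i j|.

(* J(theta) = - d u / d theta^T : entry (i,j) is - d u_i / d theta_j. *)
Definition jacobianN (R : realType) (p : nat) (f : 'cV[R]_p -> 'cV[R]_p)
    (theta : 'cV[R]_p) : 'M[R]_p :=
  \matrix_(i < p, j < p) - ('D_(delta_mx j 0) f theta) i 0.

(* Outer and inner probability of an arbitrary (possibly non-measurable) event. *)
Definition Pout d (T : measurableType d) (R : realType) (P : probability T R)
    (A : set T) : \bar R :=
  ereal_inf [set P B | B in [set B | measurable B /\ A `<=` B]].

Definition Pin d (T : measurableType d) (R : realType) (P : probability T R)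
    (A : set T) : \bar R :=
  ereal_sup [set P B | B in [set B | measurable B /\ B `<=` A]].

(* Fix n and write theta = th0 + W x with th0 = theta*_n and W = V^-1, so that the
   estimating equation becomes F x := W u(th0 + W x) = 0, with derivative -A for the
   scaled Jacobian A = W J W. Outside three exceptional events of outer probability
   at most eps/4 each, (G2)-(G4) give: y^T A(th0) y >= l |y|^2, the entries of
   A(theta) - A(th0) are below eta on the ball |x| <= D, and |F 0| <= c.
   With p eta <= l/2 the matrix A stays coercive (constant l/2) on the ball, so the
   mean value theorem gives x.F x <= x.F 0 - l/2 |x|^2, and for D = 4(|c|+1)/l this
   forces |F x|^2 > |F 0|^2 on the sphere |x| = D. Hence |F|^2 attains its minimum
   over the ball at an interior point, where its derivative along F itself,
   -2 F^T A F, vanishes; coercivity then yields F = 0. *)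

From HB Require Import structures.
From mathcomp Require Import all_boot all_order all_algebra.
From mathcomp Require Import all_classical all_reals all_analysis.
From mathcomp Require Import ring lra.
Set Implicit Arguments. Unset Strict Implicit. Unset Printing Implicit Defensive.
Import Order.TTheory GRing.Theory Num.Theory.
Import numFieldNormedType.Exports.
Local Open Scope classical_set_scope.
Local Open Scope ring_scope.

Section LinearMaps.
Variable R : realType.

Lemma linear_mx_bound m n (W : normedModType R)
    (g : {linear 'M[R]_(m, n) -> W}) (x : 'M[R]_(m, n)) :
  `|g x| <= (\sum_(i < m) \sum_(j < n) `|g (delta_mx i j)|) * `|x|.
Proof.
rewrite {1}(matrix_sum_delta x) linear_sum (le_trans (ler_norm_sum _ _ _))//.
rewrite mulr_suml ler_sum// => i _.
rewrite linear_sum (le_trans (ler_norm_sum _ _ _))// mulr_suml ler_sum// => j _.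
rewrite linearZ normrZ mulrC ler_wpM2l//.
by rewrite [leRHS]/Num.Def.normr /= mx_normrE; exact: (le_bigmax _ _ (i, j)).
Qed.

Lemma linear_mx_continuous m n (W : normedModType R)
    (g : 'M[R]_(m, n) -> W) : linear g -> continuous g.
Proof.
move=> lin_g.
pose gL : {linear _ -> _} := HB.pack g (GRing.isLinear.Build _ _ _ _ _ lin_g).
apply: (@bounded_linear_continuous _ _ _ gL); apply/linear_boundedP.
near=> r => x; apply: (le_trans (linear_mx_bound gL x)).
by apply: ler_wpM2r => //; near: r; apply: nbhs_pinfty_ge; rewrite num_real.
Unshelve. all: by end_near. Qed.

Lemma is_diff_linear_mx m n (W : normedModType R) (g : 'M[R]_(m, n) -> W)
    (x : 'M[R]_(m, n)) : linear g -> is_diff x g g.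
Proof.
move=> lin_g.
pose gL : {linear _ -> _} := HB.pack g (GRing.isLinear.Build _ _ _ _ _ lin_g).
have gL_cont : continuous gL by exact: linear_mx_continuous.
by apply: DiffDef; [exact: (linear_differentiable x gL_cont) | exact: (diff_lin x gL_cont)].
Qed.

Lemma is_diff_sum (U W : normedModType R) n (F dF : 'I_n -> U -> W) (x : U) :
  (forall i, is_diff x (F i) (dF i)) ->
  is_diff x (fun y => \sum_(i < n) F i y) (fun v => \sum_(i < n) dF i v).
Proof.
move=> dF_F; rewrite -!fct_sumE.
by elim/big_ind2: _ => // [|f df g dg *]; [exact: is_diff_cst | exact: is_diffD].
Qed.

End LinearMaps.

Section LineDerivative.
Variables (R : realType) (U V : normedModType R).

Lemma is_derive_along_line (f : U -> V) (g : V -> R) (dg : V -> R) (w x : U) (t : R) :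
  differentiable f (t *: w + x) -> is_diff (f (t *: w + x)) g dg ->
  is_derive t 1 (fun s : R => g (f (s *: w + x))) (dg ('D_w f (t *: w + x))).
Proof.
move=> df dg_g.
have line_diff : is_diff t (( *:%R^~ w) + cst x : R -> U) (( *:%R^~ w) + 0).
  exact: is_diffD.
have f_diff : is_diff ((( *:%R^~ w) + cst x : R -> U) t) f ('d f (t *: w + x)).
  exact: differentiableP.
have comp_diff := is_diff_comp (is_diff_comp line_diff f_diff) dg_g.
apply: DeriveDef; first exact: diff_derivable.
rewrite deriveE // diff_val /= -deriveE //.
by rewrite /GRing.add /= scale1r addr0.
Qed.

Lemma derive1_local_min (h : R -> R) (c : R) :
  (forall t, derivable h t 1) -> (\forall t \near c, h c <= h t) -> 'D_1 h c = 0.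
Proof.
move=> dh /nbhs_ballP[e /= e0 near_c].
suff : is_derive c 1 h 0 by case.
apply: (@derive1_at_min _ h (c - e) (c + e)).
- lra.
- by move=> t _; exact: dh.
- by rewrite in_itv /=; apply/andP; split; lra.
- move=> t; rewrite in_itv /= => /andP[cet tce]; apply: near_c.
  by rewrite /ball /= ltr_distlC cet tce.
Qed.

End LineDerivative.

Lemma le_of_not_ereal_sup_gt (T : Type) (R : realType) (F : T -> R) (S : set T) (r : R) :
  ~ (r%:E < ereal_sup [set (F t)%:E | t in S])%E -> forall t, S t -> F t <= r.
Proof.
move=> /negP; rewrite -leNgt => sup_le t St; rewrite -lee_fin.
by apply: le_trans sup_le; apply: ereal_sup_ubound; exists t.
Qed.

Section Euclidean.
Variables (R : realType) (p : nat).
Implicit Types (x y z : 'cV[R]_p) (M : 'M[R]_p).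

Definition dot x y : R := \sum_(i < p) x i 0 * y i 0.
Definition sqnorm x : R := dot x x.

Lemma dotC x y : dot x y = dot y x.
Proof. by apply: eq_bigr => i _; rewrite mulrC. Qed.

Lemma dotDr x y z : dot x (y + z) = dot x y + dot x z.
Proof. by rewrite /dot -big_split; apply: eq_bigr => i _; rewrite mxE mulrDr. Qed.

Lemma dotZr a x y : dot x (a *: y) = a * dot x y.
Proof. by rewrite /dot mulr_sumr; apply: eq_bigr => i _; rewrite mxE mulrCA. Qed.

Lemma dotNr x y : dot x (- y) = - dot x y.
Proof. by rewrite -scaleN1r dotZr mulN1r. Qed.

Lemma dotZl a x y : dot (a *: x) y = a * dot x y.
Proof. by rewrite dotC dotZr dotC. Qed.

Lemma sqnormZ a x : sqnorm (a *: x) = a ^+ 2 * sqnorm x.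
Proof. by rewrite /sqnorm dotZl dotZr mulrA expr2. Qed.

Lemma sqnormN x : sqnorm (- x) = sqnorm x.
Proof. by rewrite -scaleN1r sqnormZ sqrrN expr1n mul1r. Qed.

Lemma sqnorm0 : sqnorm 0 = 0.
Proof. by rewrite -(scale0r 0) sqnormZ expr0n mul0r. Qed.

Lemma sqnorm_ge0 x : 0 <= sqnorm x.
Proof. by apply: sumr_ge0 => i _; rewrite -expr2 sqr_ge0. Qed.

Lemma sqnorm_eq0 x : sqnorm x = 0 -> x = 0.
Proof.
move=> /eqP; rewrite psumr_eq0 => [/allP x0|i _]; last by rewrite -expr2 sqr_ge0.
apply/matrixP => i k; rewrite (ord1 k) mxE.
by have /(_ (mem_index_enum i))/= := x0 i; rewrite mulf_eq0 orbb => /eqP.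
Qed.

Lemma coord_sqr_le_sqnorm x i : x i 0 ^+ 2 <= sqnorm x.
Proof.
rewrite /sqnorm /dot (bigD1 i) //= -expr2 lerDl.
by apply: sumr_ge0 => j _; rewrite -expr2 sqr_ge0.
Qed.

Lemma enorm_sqnorm x : enorm x = Num.sqrt (sqnorm x).
Proof. by congr Num.sqrt; apply: eq_bigr => i _; rewrite expr2. Qed.

Lemma sqnorm_enorm x : sqnorm x = enorm x ^+ 2.
Proof. by rewrite enorm_sqnorm sqr_sqrtr // sqnorm_ge0. Qed.

Lemma enorm_le x (r : R) : 0 <= r -> (enorm x <= r) = (sqnorm x <= r ^+ 2).
Proof. by move=> r_ge0; rewrite sqnorm_enorm ler_sqr ?nnegrE // enorm_sqnorm sqrtr_ge0. Qed.

Lemma dot_amgm a x y : 2 * a * dot x y <= a ^+ 2 * sqnorm x + sqnorm y.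
Proof.
rewrite /sqnorm /dot !mulr_sumr -big_split /= ler_sum // => i _.
have : 0 <= (a * x i 0 - y i 0) ^+ 2 by rewrite sqr_ge0.
by move: (x i 0) (y i 0) => s t; nra.
Qed.

Lemma is_diff_sqnorm x : is_diff x sqnorm (fun v => 2 * dot x v).
Proof.
have coord_diff i : is_diff x (fun z : 'cV[R]_p => z i 0) (fun z => z i 0).
  by apply: is_diff_linear_mx => a u v; rewrite !mxE.
have := is_diff_sum (fun i => is_diffM (coord_diff i) (coord_diff i)).
move/is_diff_eq => /(_ (fun v => 2 * dot x v)); apply.
apply/funext => v; rewrite /dot mulr_sumr.
by apply: eq_bigr => i _; rewrite /= !fctE mulr_natl mulr2n.
Qed.

Lemma continuous_sqnorm : continuous sqnorm.
Proof. by move=> x; apply: differentiable_continuous; case: (is_diff_sqnorm x). Qed.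

(* [bounded_closed_compact] is only available for row vectors, hence the transposition. *)
Lemma compact_sqnorm_le (r : R) : compact [set x | sqnorm x <= r ^+ 2].
Proof.
have trmx_cont m n : continuous (@trmx R m n).
  by apply: linear_mx_continuous => a u v; rewrite linearP.
set K := [set x | sqnorm x <= r ^+ 2].
have K_closed : closed K.
  change (closed (sqnorm @^-1` [set s | s <= r ^+ 2])).
  by apply: preimage_closed; [move=> x _; exact: continuous_sqnorm | exact: closed_le].
have -> : K = trmx @` (trmx @^-1` K).
  apply/seteqP; split => [x Kx|_ [y Ky <-]] //=.
  by exists x^T; rewrite /= trmxK.
apply: continuous_compact; first by apply: continuous_subspaceT; exact: trmx_cont.
apply: bounded_closed_compact; last first.
  by apply: preimage_closed K_closed => y _; exact: trmx_cont.
rewrite /= /bounded_near; near=> B => y /= Ky; rewrite [leLHS]/Num.Def.normr /= mx_normrE.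
apply: bigmax_le => [|[i j] _ /=]; first by near: B; apply: nbhs_pinfty_ge; rewrite num_real.
have : `|y i j| ^+ 2 <= `|r| ^+ 2.
  rewrite !real_normK ?num_real // (ord1 i).
  by apply: le_trans Ky; have := coord_sqr_le_sqnorm y^T j; rewrite mxE.
rewrite ler_sqr ?nnegrE // => /le_trans; apply.
by near: B; apply: nbhs_pinfty_ge; rewrite num_real.
Unshelve. all: by end_near. Qed.

Definition qform M x : R := (x^T *m M *m x) 0 0.

Lemma qform_dot M x : qform M x = dot x (M *m x).
Proof. by rewrite /qform -mulmxA mxE; apply: eq_bigr => i _; rewrite mxE. Qed.

Lemma qformZ M a x : qform M (a *: x) = a ^+ 2 * qform M x.
Proof. by rewrite !qform_dot dotZl -scalemxAr dotZr mulrA -expr2. Qed.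

Lemma qform0 M : qform M 0 = 0.
Proof. by rewrite /qform mulmx0 mxE. Qed.

Lemma qformB M N x : qform (M - N) x = qform M x - qform N x.
Proof. by rewrite !qform_dot mulmxBl dotDr dotNr. Qed.

Lemma normr_entry_le_mnormM M i j : `|M i j| <= mnormM M.
Proof. by apply: le_trans (le_bigmax _ _ i); exact: le_bigmax. Qed.

Lemma normr_qform_le M x : `|qform M x| <= mnormM M * p%:R * sqnorm x.
Proof.
set m := mnormM M; pose a i := x i 0 * x i 0.
have term_le i j : `|x i 0 * (M i j * x j 0)| <= m / 2 * (a i + a j).
  rewrite !normrM mulrCA -[m / 2 * _]mulrA ler_pM ?normr_ge0 ?mulr_ge0 //.
    exact: normr_entry_le_mnormM.
  have : 0 <= (`|x i 0| - `|x j 0|) ^+ 2 := sqr_ge0 _.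
  rewrite /a -!expr2 -[x i 0 ^+ 2]real_normK ?num_real // -[x j 0 ^+ 2]real_normK ?num_real //; nra.
have double_sum : \sum_(i < p) \sum_(j < p) (a i + a j) = (p%:R * sqnorm x) *+ 2.
  under eq_bigr do rewrite big_split /= sumr_const card_ord.
  by rewrite big_split /= sumrMnl sumr_const card_ord -mulr2n mulr_natl.
rewrite qform_dot (le_trans (ler_norm_sum _ _ _)) //.
apply: (@le_trans _ _ (\sum_(i < p) \sum_(j < p) m / 2 * (a i + a j))).
  apply: ler_sum => i _; rewrite mxE mulr_sumr (le_trans (ler_norm_sum _ _ _)) //.
  by apply: ler_sum => j _; exact: term_le.
under eq_bigr do rewrite -mulr_sumr.
by rewrite -mulr_sumr double_sum mulr2n mulrDr -mulrDl -splitr mulrA.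
Qed.

Lemma qform_ge_sqnorm M (l : R) x :
  (forall phi, sqnorm phi = 1 -> l <= qform M phi) -> l * sqnorm x <= qform M x.
Proof.
move=> M_ge; have [x0|x_neq0] := eqVneq x 0; first by rewrite x0 sqnorm0 qform0 mulr0.
have x_gt0 : 0 < sqnorm x.
  by rewrite lt_def sqnorm_ge0 andbT; apply: contra_neq x_neq0; exact: sqnorm_eq0.
set r := Num.sqrt (sqnorm x).
have r2 : r ^+ 2 = sqnorm x by rewrite sqr_sqrtr // ltW.
have := M_ge (r^-1 *: x); rewrite sqnormZ qformZ exprVn r2 mulVf ?gt_eqF //.
by move=> /(_ erefl); rewrite ler_pdivlMl // mulrC.
Qed.

Lemma qform_ge_of_inf_ge M (l : R) :
  ~ (inf [set qform M phi | phi in [set phi | enorm phi = 1]] < l) ->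
  forall phi, sqnorm phi = 1 -> l <= qform M phi.
Proof.
move=> /negP; rewrite -leNgt => l_le_inf phi phi1; apply: le_trans l_le_inf _.
apply: ge_inf; last by exists phi; rewrite //= enorm_sqnorm phi1 sqrtr1.
exists (- (mnormM M * p%:R)) => _ [psi psi1 <-].
have := normr_qform_le M psi; rewrite sqnorm_enorm psi1 expr1n mulr1.
by rewrite ler_norml => /andP[].
Qed.

End Euclidean.

Section ScaledJacobian.
Variables (R : realType) (p : nat).
Implicit Types (f : 'cV[R]_p -> 'cV[R]_p) (W : 'M[R]_p) (x th v : 'cV[R]_p).

Lemma derive_jacobianN f th v :
  differentiable f th -> 'D_v f th = - (jacobianN f th *m v).
Proof.
move=> df; rewrite deriveE // {1}(matrix_sum_delta v) linear_sum.
apply/matrixP => i k; rewrite (ord1 k) !mxE summxE -sumrN; apply: eq_bigr => j _.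
by rewrite big_ord1 linearZ /= -deriveE // !mxE mulNr opprK mulrC (ord1 (0 : 'I_1)).
Qed.

Definition scaled_jacobian f W th := W *m jacobianN f th *m W.

Lemma dot_derive_scaled f W th x : differentiable f th ->
  dot x (W *m 'D_(W *m x) f th) = - qform (scaled_jacobian f W th) x.
Proof.
by move=> df; rewrite derive_jacobianN // qform_dot -!mulmxA mulmxN dotNr.
Qed.

End ScaledJacobian.

Section LocalRoot.
Variables (R : realType) (p : nat) (f : 'cV[R]_p -> 'cV[R]_p) (W : 'M[R]_p)
  (th0 : 'cV[R]_p) (l eta D : R).
Hypothesis f_diff : forall th, differentiable f th.
Hypothesis l_gt0 : 0 < l.
Hypothesis eta_small : p%:R * eta <= l / 2.
Hypothesis A_coercive :
  forall phi, sqnorm phi = 1 -> l <= qform (scaled_jacobian f W th0) phi.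
Hypothesis A_close : forall x, sqnorm x <= D ^+ 2 ->
  mnormM (scaled_jacobian f W (th0 + W *m x) - scaled_jacobian f W th0) <= eta.

Local Notation A := (scaled_jacobian f W).
Let F x := W *m f (th0 + W *m x).

Lemma qform_ge_in_ball x phi :
  sqnorm x <= D ^+ 2 -> l / 2 * sqnorm phi <= qform (A (th0 + W *m x)) phi.
Proof.
move=> x_in; have base := qform_ge_sqnorm phi A_coercive.
have : `|qform (A (th0 + W *m x) - A th0) phi| <= l / 2 * sqnorm phi.
  apply: le_trans (normr_qform_le _ _) _; apply: ler_wpM2r; first exact: sqnorm_ge0.
  by apply: le_trans eta_small; rewrite mulrC ler_wpM2l // A_close.
rewrite qformB ler_norml lerBrDr => /andP[+ _]; apply: le_trans.
by rewrite addrC lerBrDr -mulrDl -splitr.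
Qed.

Lemma dot_decrease x :
  sqnorm x <= D ^+ 2 -> dot x (F x) <= dot x (W *m f th0) - l / 2 * sqnorm x.
Proof.
move=> x_in; set w := W *m x.
pose g z := dot x (W *m z).
have g_diff z : is_diff z g g.
  by apply: is_diff_linear_mx => a u v; rewrite /g mulmxDr -scalemxAr dotDr dotZr.
pose h (t : R) := g (f (t *: w + th0)).
have h_deriv (t : R) : is_derive t 1 h (g ('D_w f (t *: w + th0))).
  exact: is_derive_along_line (f_diff _) (g_diff _).
have h_cont : {within `[0, 1], continuous h}.
  by apply: derivable_within_continuous => t _; exact: ex_derive.
have [t t01 mvt] := MVT ltr01 (fun t _ => h_deriv t) h_cont.
have -> : dot x (F x) = h 1 by rewrite /h /g scale1r addrC.
have -> : dot x (W *m f th0) = h 0 by rewrite /h /g scale0r add0r.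
have tx_in : sqnorm (t *: x) <= D ^+ 2.
  move: t01; rewrite in_itv /= => /andP[t_gt0 t_lt1].
  rewrite sqnormZ (le_trans _ x_in) // ler_piMl ?sqnorm_ge0 // expr_le1 // ltW //.
have := qform_ge_in_ball x tx_in; rewrite -scalemxAr addrC.
rewrite subr0 mulr1 /g dot_derive_scaled // in mvt.
by rewrite -[h 1](subrK (h 0)) mvt [_ + h 0]addrC lerD2l lerN2.
Qed.

Lemma sqnorm_gt_on_sphere (c : R) x : sqnorm (W *m f th0) <= c ->
  16 * c < l ^+ 2 * D ^+ 2 -> sqnorm x = D ^+ 2 -> c < sqnorm (F x).
Proof.
move=> F0_le lD_big x_sphere.
have decr : dot x (F x) <= dot x (W *m f th0) - l / 2 * sqnorm x.
  by apply: dot_decrease; rewrite x_sphere.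
(* AM-GM with weight l/4 on x.F(0) and on -x.F(x), added to the decrease bound,
   gives |F x|^2 >= l^2 D^2 / 8 - c > c. *)
have amgm0 := dot_amgm (l / 4) x (W *m f th0).
have amgm1 := dot_amgm (l / 4) x (- F x); rewrite dotNr sqnormN in amgm1.
rewrite -x_sphere in lD_big.
(* Generalizing the vector expressions keeps nra from unfolding them. *)
move: decr amgm0 amgm1 F0_le lD_big.
move: (dot x (F x)) (dot x (W *m f th0)) (sqnorm (F x)) (sqnorm (W *m f th0)) (sqnorm x).
move=> d d0 sF s0 s decr amgm0 amgm1 F0_le lD_big.
have ld : l * d <= l * d0 - l * l / 2 * s.
  by have := ler_wpM2l (ltW l_gt0) decr; rewrite mulrBr !mulrA.
rewrite expr2 in amgm0 amgm1 lD_big.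
clear -l_gt0 ld amgm0 amgm1 F0_le lD_big; nra.
Qed.

Lemma root_at_local_min x0 : sqnorm x0 <= D ^+ 2 ->
  (\forall x \near x0, sqnorm (F x0) <= sqnorm (F x)) -> F x0 = 0.
Proof.
move=> x0_in x0_min; set y := F x0; set th := th0 + W *m x0.
pose g z := sqnorm (W *m z).
pose dg z v := 2 * dot (W *m z) (W *m v).
have g_diff z : is_diff z g (dg z).
  have W_diff : is_diff z (fun z => W *m z) (fun z => W *m z).
    by apply: is_diff_linear_mx => a u v; rewrite mulmxDr scalemxAr.
  exact: is_diff_comp W_diff (is_diff_sqnorm (W *m z)).
pose h (t : R) := g (f (t *: (W *m y) + th)).
have h_deriv (t : R) :
    is_derive t 1 h (dg (f (t *: (W *m y) + th)) ('D_(W *m y) f (t *: (W *m y) + th))).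
  exact: is_derive_along_line (f_diff _) (g_diff _).
have h_F (t : R) : h t = sqnorm (F (t *: y + x0)).
  by rewrite /h /g /F mulmxDr -scalemxAr addrCA.
have h_min : \forall t \near 0, h 0 <= h t.
  have line_cont : continuous (( *:%R^~ y) + cst x0 : R -> 'cV[R]_p).
    by move=> t; apply: continuousD; [exact: scalel_continuous | exact: cst_continuous].
  have := line_cont 0; rewrite /continuous_at {2}fctE /= scale0r add0r.
  move=> /(_ _ x0_min) line_near; near=> t.
  by rewrite !h_F scale0r add0r; near: t; exact: line_near.
have h_derivable (t : R) : derivable h t 1 by case: (h_deriv t).
(* h'(0) = -2 y^T A y, which vanishes only for y = 0 by coercivity. *)
have := derive1_local_min h_derivable h_min.
case: (h_deriv 0) => _ ->; rewrite scale0r add0r /dg dot_derive_scaled // -/y.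
move/eqP; rewrite mulf_eq0 pnatr_eq0 oppr_eq0 /= => /eqP qform_eq0.
have := qform_ge_in_ball y x0_in; rewrite -/th qform_eq0 pmulr_rle0 ?divr_gt0 // => y_le0.
by apply/sqnorm_eq0/eqP; rewrite eq_le sqnorm_ge0 andbT.
Unshelve. all: by end_near. Qed.

Lemma exists_root_in_ball (c : R) : sqnorm (W *m f th0) <= c ->
  16 * c < l ^+ 2 * D ^+ 2 ->
  exists2 x, sqnorm x <= D ^+ 2 & W *m f (th0 + W *m x) = 0.
Proof.
move=> F0_le lD_big; pose G x := sqnorm (F x).
have W_cont : continuous (fun z : 'cV[R]_p => W *m z).
  by apply: linear_mx_continuous => a u v; rewrite mulmxDr scalemxAr.
have G_cont : continuous G.
  have -> : G = @sqnorm R p \o (fun z => W *m z) \o f \o (cst th0 + (fun z => W *m z)) by [].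
  move=> x; apply: continuous_comp.
    by apply: continuousD; [exact: cst_continuous | exact: W_cont].
  apply: continuous_comp; first exact: differentiable_continuous.
  by apply: continuous_comp; [exact: W_cont | exact: continuous_sqnorm].
have ball_ne : [set x : 'cV[R]_p | sqnorm x <= D ^+ 2] !=set0.
  by exists 0; rewrite /= sqnorm0 sqr_ge0.
have [x0] := compact_EVT_min ball_ne (@compact_sqnorm_le _ _ D) (continuous_subspaceT G_cont).
rewrite inE => x0_in x0_min.
have G0_le : G x0 <= c.
  by apply: le_trans (x0_min 0 _) _; rewrite ?inE /= ?sqnorm0 ?sqr_ge0 // /G /F mulmx0 addr0.
have x0_inner : sqnorm x0 < D ^+ 2.
  rewrite lt_neqAle x0_in andbT; apply/eqP => x0_sphere.
  by have := sqnorm_gt_on_sphere F0_le lD_big x0_sphere; rewrite ltNge G0_le.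
exists x0 => //; apply: root_at_local_min => //.
near=> x; apply: x0_min; rewrite inE /=; apply: ltW; near: x.
by apply: cvgr_lt x0_inner; exact: continuous_sqnorm.
Unshelve. all: by end_near. Qed.

End LocalRoot.

Section OuterInner.
Context d (T : measurableType d) (R : realType) (P : probability T R).

Lemma Pout_setU_lt (A B : set T) (a b : R) :
  (Pout P A < a%:E)%E -> (Pout P B < b%:E)%E -> (Pout P (A `|` B) < (a + b)%:E)%E.
Proof.
move=> /ereal_inf_lt[_ [A' [mA' AA'] <-] PA'] /ereal_inf_lt[_ [B' [mB' BB'] <-] PB'].
have AB_cover : [set P C | C in [set C | measurable C /\ A `|` B `<=` C]] (P (A' `|` B')).
  by exists (A' `|` B') => //; split; [exact: measurableU | exact: setUSS].
apply: le_lt_trans (ereal_inf_lbound AB_cover) _.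
by apply: le_lt_trans (measureU2 _ _ _) _ => //; rewrite EFinD lteD.
Qed.

Lemma Pin_gt_of_Pout_lt (A G : set T) (r : R) :
  ~` G `<=` A -> (Pout P A < r%:E)%E -> ((1 - r)%:E < Pin P G)%E.
Proof.
move=> GA /ereal_inf_lt[_ [B [mB AB] <-] PB].
have BC_inner : [set P C | C in [set C | measurable C /\ C `<=` G]] (P (~` B)).
  exists (~` B) => //; split; first exact: measurableC.
  by move=> w /= Bw; apply: contrapT => Gw; apply: Bw; apply/AB/GA.
apply: lt_le_trans (ereal_sup_ubound BC_inner).
rewrite probability_setC // -(fineK (fin_num_measure P _ mB)) in PB *.
by rewrite -EFinB lte_fin; rewrite lte_fin in PB; lra.
Qed.

End OuterInner.

Section GoodEvent.
Variables (R : realType) (p : nat) (f : 'cV[R]_p -> 'cV[R]_p) (V : 'M[R]_p)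
  (th0 : 'cV[R]_p) (l eta D c : R).
Hypothesis V_unit : V \in unitmx.
Hypothesis f_diff : forall th, differentiable f th.
Hypothesis l_gt0 : 0 < l.
Hypothesis eta_small : p%:R * eta <= l / 2.
Hypothesis D_ge0 : 0 <= D.
Hypothesis lD_big : 16 * c ^+ 2 < l ^+ 2 * D ^+ 2.

Lemma exists_root_of_good_event :
  ~ (inf [set (phi^T *m invmx V *m jacobianN f th0 *m invmx V *m phi) 0 0
          | phi in [set phi : 'cV[R]_p | enorm phi = 1]] < l) ->
  ~ (eta%:E < ereal_sup [set (mnormM (invmx V *m (jacobianN f theta
          - jacobianN f th0) *m invmx V))%:E
          | theta in [set theta : 'cV[R]_p | (enorm (V *m (theta - th0)) <= D)%R]])%E ->
  ~ (enorm (invmx V *m f th0) > c) ->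
  exists theta, f theta = 0 /\ enorm (V *m (theta - th0)) < D + 1.
Proof.
set W := invmx V => good_inf good_sup good_u.
have VW z : V *m (W *m z) = z by rewrite mulmxA mulmxV // mul1mx.
have coercive : forall phi, sqnorm phi = 1 -> l <= qform (scaled_jacobian f W th0) phi.
  apply: qform_ge_of_inf_ge; move: good_inf; congr (~ (inf _ < l)).
  by apply: eq_imagel => phi _; rewrite /qform !mulmxA.
have close x : sqnorm x <= D ^+ 2 ->
    mnormM (scaled_jacobian f W (th0 + W *m x) - scaled_jacobian f W th0) <= eta.
  move=> x_in; rewrite -mulmxBl -mulmxBr; apply: le_of_not_ereal_sup_gt good_sup _ _.
  by rewrite /= addrAC subrr add0r VW enorm_le.
have u_small : sqnorm (W *m f th0) <= c ^+ 2.
  have u_le : enorm (W *m f th0) <= c by rewrite leNgt; apply/negP.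
  by rewrite -enorm_le // (le_trans _ u_le) // enorm_sqnorm sqrtr_ge0.
have [x x_in x_root] :=
  exists_root_in_ball f_diff l_gt0 eta_small coercive close u_small lD_big.
exists (th0 + W *m x); split; first by rewrite -[f _]VW x_root mulmx0.
rewrite addrAC subrr add0r VW (@le_lt_trans _ _ D) ?ltrDl //.
by rewrite enorm_le.
Qed.

End GoodEvent.

Theorem theoremE1 (d : measure_display) (T : measurableType d) (R : realType)
  (P : probability T R) (p : nat)
  (u : nat -> T -> 'cV[R]_p -> 'cV[R]_p)
  (V : nat -> 'M[R]_p) (thetas : nat -> 'cV[R]_p) :
  (forall n w theta, differentiable (u n w) theta) ->
  (forall n, V n \in unitmx) ->
  (forall n, (V n)^T = V n) ->
  (* (G1) *)
  (opnorm (invmx (V n)) @[n --> \oo] --> 0) ->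
  (* (G2) *)
  (exists l : R, 0 < l /\
     forall e : R, 0 < e -> \forall n \near \oo,
       (Pout P ([set w | inf [set ((phi^T *m invmx (V n) *m jacobianN (u n w) (thetas n)
                                    *m invmx (V n) *m phi) 0 0)
                            | phi in [set phi : 'cV[R]_p | enorm phi = 1]] < l])%R
        <= e%:E)%E) ->
  (* (G3) *)
  (forall dd : R, 0 < dd -> forall eta : R, 0 < eta -> forall e : R, 0 < e ->
     \forall n \near \oo,
       (Pout P [set w | (eta%:E < ereal_sup
           [set (mnormM (invmx (V n) *m (jacobianN (u n w) theta
                          - jacobianN (u n w) (thetas n)) *m invmx (V n)))%:E
           | theta in [set theta : 'cV[R]_p |
                        (enorm (V n *m (theta - thetas n)) <= dd)%R]])%E]
        <= e%:E)%E) ->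
  (* (G4) *)
  (forall e : R, 0 < e -> exists dd : R, \forall n \near \oo,
     (Pout P ([set w | enorm (invmx (V n) *m u n w (thetas n)) > dd])%R <= e%:E)%E) ->
  forall e : R, 0 < e -> exists dd : R, 0 < dd /\ \forall n \near \oo,
    (Pin P ([set w | exists theta : 'cV[R]_p,
                      u n w theta = 0 /\ enorm (V n *m (theta - thetas n)) < dd])%R
     > (1 - e)%:E)%E.
Proof.
move=> u_diff V_unit _ _ [l [l_gt0 G2]] G3 G4 e e_gt0.
have e4_gt0 : 0 < e / 4 by rewrite divr_gt0.
have [c G4c] := G4 _ e4_gt0.
pose D := 4 * (`|c| + 1) / l; pose eta := l / (2 * (p%:R + 1)).
have D_gt0 : 0 < D by rewrite divr_gt0 // mulr_gt0 // ltr_wpDl.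
have eta_gt0 : 0 < eta by rewrite divr_gt0 // mulr_gt0 // ltr_wpDl.
have lD_big : 16 * c ^+ 2 < l ^+ 2 * D ^+ 2.
  have -> : l ^+ 2 * D ^+ 2 = (4 * (`|c| + 1)) ^+ 2.
    by rewrite -exprMn /D mulrCA mulfV ?gt_eqF // mulr1.
  rewrite -real_normK ?num_real //.
  by have := normr_ge0 c; move: `|c| => a a_ge0; nra.
have eta_small : p%:R * eta <= l / 2.
  rewrite /eta mulrA ler_pdivrMr ?mulr_gt0 ?ltr_wpDl //.
  by have : 0 <= p%:R :> R by []; move: (p%:R : R) => q q_ge0; nra.
exists (D + 1); split; first by rewrite ltr_wpDl // ltW.
move: (G2 _ e4_gt0) (G3 D D_gt0 eta eta_gt0 _ e4_gt0) G4c.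
apply: filterS3 => n bad2 bad3 bad4.
have third A : (Pout P A <= (e / 4)%:E)%E -> (Pout P A < (e / 3)%:E)%E.
  by move=> /le_lt_trans; apply; rewrite lte_fin; lra.
have -> : e = e / 3 + e / 3 + e / 3 by field.
apply: Pin_gt_of_Pout_lt
  (Pout_setU_lt (Pout_setU_lt (third _ bad2) (third _ bad3)) (third _ bad4)).
move=> w w_bad; apply: contrapT => /not_orP[/not_orP[good2 good3] good4]; apply: w_bad.
exact: exists_root_of_good_event (V_unit n) (u_diff n w) l_gt0 eta_small (ltW D_gt0)
  lD_big good2 good3 good4.
Qed.
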